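(* Let $\|\cdot\|$ be a strictly convex norm on $\mathbb{R}^n$ that is continuously differentiable on $\mathbb{R}^n\setminus\{0\}$, with gradient $N(x)$ at $x\ne0$, and set $h(x,y)=\|y\|-\langle y,N(x)\rangle$ for $x\ne0$. (1) Suppose there are constants $T,r>0$ such that $h(x,x+2y)\le T h(x,x+y)$ whenever $x\ne0$, $\|y\|\le r\|x\|$ and $\langle y,N(x)\rangle=0$. Then there is a constant $T'$ such that $h(x,x+2y)\le T' h(x,x+y)$ for all $x\neq 0$ and all $y$ with $\langle y,N(x)\rangle=0$. (2) Suppose there are constants $r,K>0$ such that $h(x,x+y)\le K h(x,x-y)$ whenever $x\ne0$, $\|y\|\le r\|x\|$ and $\langle y,N(x)\rangle=0$. Then there is a constant $K'$ such that $h(x,x+y)\le K' h(x,x-y)$ for all $x\ne0$ and all $y$ with $\langle y,N(x)\rangle=0$.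
   Context: $\langle\cdot,\cdot\rangle$ is the Euclidean inner product. Strict convexity of the norm means: if $x,y\neq0$ and $\|x+y\|=\|x\|+\|y\|$, then $y=\alpha x$ for some $\alpha>0$. The hypothesis of (1) is called ''doubling in the tangent plane'', that of (2) ''balanced in the tangent plane''. *)

(* R^n is 'rV[R]_n for R : realType. *)
From HB Require Import structures.
From mathcomp Require Import all_boot all_order all_algebra.
From mathcomp Require Import all_classical all_reals all_analysis.
Set Implicit Arguments. Unset Strict Implicit. Unset Printing Implicit Defensive.
Import Order.TTheory GRing.Theory Num.Theory.
Import numFieldNormedType.Exports.
Local Open Scope ring_scope.

Definition dotv (R : realType) (n : nat) (u v : 'rV[R]_n) : R :=
  \sum_(i < n) u ord0 i * v ord0 i.

Definition is_norm (R : realType) (n : nat) (nrm : 'rV[R]_n -> R) : Prop :=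
  [/\ forall x, 0 <= nrm x,
      forall x, nrm x = 0 -> x = 0,
      forall (a : R) x, nrm (a *: x) = `|a| * nrm x
    & forall x y, nrm (x + y) <= nrm x + nrm y].

Definition strictly_convex_norm (R : realType) (n : nat) (nrm : 'rV[R]_n -> R) : Prop :=
  forall x y, x != 0 -> y != 0 -> nrm (x + y) = nrm x + nrm y ->
    exists2 a : R, 0 < a & y = a *: x.

(* nrm is C^1 on R^n \ {0} with gradient N: differentiable at each x <> 0,
   with differential v |-> <v, N x>, and N continuous at each x <> 0. *)
Definition C1_gradient (R : realType) (n : nat) (nrm : 'rV[R]_n -> R)
  (N : 'rV[R]_n -> 'rV[R]_n) : Prop :=
  forall x, x != 0 ->
    [/\ differentiable nrm x,
        (forall v, ('d nrm x : 'rV[R]_n -> R) v = dotv v (N x))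
      & {for x, continuous N}].

Definition hfun (R : realType) (n : nat) (nrm : 'rV[R]_n -> R)
  (N : 'rV[R]_n -> 'rV[R]_n) (x y : 'rV[R]_n) : R :=
  nrm y - dotv y (N x).

From HB Require Import structures.
From mathcomp Require Import all_boot all_order all_algebra.
From mathcomp Require Import all_classical all_reals all_analysis.
From mathcomp Require Import ring lra.
Set Implicit Arguments. Unset Strict Implicit. Unset Printing Implicit Defensive.
Import Order.TTheory GRing.Theory Num.Theory.
Import numFieldNormedType.Exports.
Local Open Scope ring_scope.
Local Open Scope classical_set_scope.

(* For a nonzero tangent vector z (<z, N x> = 0) strict convexity makes the
   excess h(x, x + z) = ||x + z|| - ||x|| positive.  Since N is invariant under
   positive scaling, compactness of {||x|| = 1} x {||z|| = r} turns this into
   h(x, x + z) >= c ||x|| when ||z|| = r ||x||, and convexity of h(x, x + .)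
   together with h(x, x) = 0 extends it to h(x, x + y) >= (c / r) ||y|| for all
   tangent y with ||y|| >= r ||x||.  As h(x, x + y) <= ||y|| for tangent y, both
   ratios are bounded by 2 r / c and r / c outside the ball ||y|| <= r ||x||,
   and by the hypothesis inside it. *)

Section inner_product.
Variables (R : realType) (n : nat).
Implicit Types u v w : 'rV[R]_n.

Lemma dotvDl u v w : dotv (u + v) w = dotv u w + dotv v w.
Proof. by rewrite /dotv -big_split; apply: eq_bigr => i _; rewrite mxE mulrDl. Qed.

Lemma dotvZl a u w : dotv (a *: u) w = a * dotv u w.
Proof. by rewrite /dotv mulr_sumr; apply: eq_bigr => i _; rewrite mxE mulrA. Qed.

Lemma dotvNl u w : dotv (- u) w = - dotv u w.
Proof. by rewrite -scaleN1r dotvZl mulN1r. Qed.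

Lemma continuous_dotv (T : topologicalType) (f g : T -> 'rV[R]_n) t :
  {for t, continuous f} -> {for t, continuous g} ->
  {for t, continuous (fun s => dotv (f s) (g s))}.
Proof.
move=> cf cg; rewrite /prop_for /continuous_at /dotv.
apply: (@cvg_big _ _ +%R 0 xpredT add_continuous) => i _.
by apply: cvgM; [exact: (continuous_comp cf (@coord_continuous R 1 n ord0 i _))
                | exact: (continuous_comp cg (@coord_continuous R 1 n ord0 i _))].
Qed.

End inner_product.

Lemma mx_coord_le_norm (R : realType) (n : nat) (x : 'rV[R]_n) i :
  `|x ord0 i| <= `|x|.
Proof.
rewrite [leRHS]/Num.Def.normr /= mx_normrE; apply/bigmax_geP; right.
by exists (ord0, i).
Qed.

Lemma compact_level_set (R : realType) (n : nat) (f : 'rV[R]_n -> R) s M :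
  continuous f -> (forall x, f x = s -> `|x| <= M) -> compact [set x | f x = s].
Proof.
move=> cf fM; apply: bounded_closed_compact.
  exists M; split; first exact: num_real.
  by move=> M' ltMM' x /fM /le_trans; apply; exact: ltW.
exact: (preimage_closed (fun x _ => cf x) (@closed_eq _ s)).
Qed.

Lemma normrZV (R : realType) (n : nat) (x : 'rV[R]_n) :
  x != 0 -> `|(`|x|^-1 *: x)| = 1.
Proof.
move=> x0; have x_gt0 : 0 < `|x| by rewrite normr_gt0.
by rewrite normrZ normrV ?unitfE ?gt_eqF // normr_id mulVf ?gt_eqF.
Qed.

Section norm.
Variables (R : realType) (n : nat) (nrm : 'rV[R]_n -> R).
Hypothesis nrmP : is_norm nrm.

Lemma nrm_ge0 x : 0 <= nrm x.
Proof. by case: nrmP. Qed.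

Lemma nrm_triangle x y : nrm (x + y) <= nrm x + nrm y.
Proof. by case: nrmP. Qed.

Lemma nrmZ a x : nrm (a *: x) = `|a| * nrm x.
Proof. by case: nrmP. Qed.

Lemma nrmZ_ge0 a x : 0 <= a -> nrm (a *: x) = a * nrm x.
Proof. by move=> a0; rewrite nrmZ ger0_norm. Qed.

Lemma nrm0 : nrm 0 = 0.
Proof. by rewrite -(scale0r 0) nrmZ_ge0 // mul0r. Qed.

Lemma nrmN x : nrm (- x) = nrm x.
Proof. by rewrite -scaleN1r nrmZ normrN normr1 mul1r. Qed.

Lemma nrm_gt0 x : x != 0 -> 0 < nrm x.
Proof.
case: nrmP => _ nrm_eq0 _ _ x0; rewrite lt_neqAle nrm_ge0 andbT eq_sym.
by apply: contra x0 => /eqP/nrm_eq0/eqP.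
Qed.

Lemma nrm_le_mx_norm : exists2 C : R, 0 < C & forall x, nrm x <= C * `|x|.
Proof.
exists (1 + \sum_(i < n) nrm (delta_mx ord0 i)) => [|x].
  by rewrite ltr_pwDl // sumr_ge0 // => i _; exact: nrm_ge0.
rewrite {1}(matrix_sum_delta x) big_ord1.
apply: (le_trans (y := \sum_(i < n) `|x| * nrm (delta_mx ord0 i))).
  apply: (big_ind2 (fun u v => nrm u <= v)); first by rewrite nrm0.
    by move=> ? ? ? ? le1 le2; apply: le_trans (nrm_triangle _ _) (lerD le1 le2).
  by move=> i _; rewrite nrmZ ler_wpM2r ?nrm_ge0 ?mx_coord_le_norm.
by rewrite -mulr_sumr mulrC ler_wpM2r // lerDr.
Qed.

Lemma ler_dist_nrm x y : `|nrm x - nrm y| <= nrm (x - y).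
Proof.
rewrite ler_norml; apply/andP; split.
  by have := nrm_triangle (y - x) x; rewrite subrK -opprB nrmN; lra.
by have := nrm_triangle (x - y) y; rewrite subrK; lra.
Qed.

Lemma continuous_nrm : continuous nrm.
Proof.
move=> a; have [C C0 nrmC] := nrm_le_mx_norm.
apply/(@cvgrPdist_lt _ _ _ _ (nbhs_filter a)) => e e0.
near=> x; apply: le_lt_trans (ler_dist_nrm _ _) _; apply: le_lt_trans (nrmC _) _.
rewrite mulrC -ltr_pdivlMr //; near: x; apply: cvgr_dist_lt => //.
by rewrite divr_gt0.
Unshelve. all: end_near.
Qed.

Lemma mx_norm_le_nrm : exists2 c : R, 0 < c & forall x, c * `|x| <= nrm x.
Proof.
pose S := [set x : 'rV[R]_n | `|x| = 1].
have scale c : (forall u, S u -> c <= nrm u) -> forall x, c * `|x| <= nrm x.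
  move=> cS x; have [->|x0] := eqVneq x 0; first by rewrite normr0 mulr0 nrm_ge0.
  have x_gt0 : 0 < `|x| by rewrite normr_gt0.
  have := cS _ (normrZV x0); rewrite nrmZ_ge0; last by rewrite invr_ge0 ltW.
  by rewrite ler_pdivlMl // mulrC.
have [[u Su]|S0] := pselect (S !=set0); last first.
  by exists 1 => //; apply: scale => u Su; exfalso; apply: S0; exists u.
have cS : compact S.
  by apply: (@compact_level_set _ _ _ _ 1) => [x|x ->]; [exact: norm_continuous|].
have [v /set_mem Sv v_min] := compact_EVT_min (ex_intro _ u Su) cS
  (continuous_subspaceT continuous_nrm).
have v0 : v != 0.
  by apply: contra_eq_neq Sv => ->; rewrite normr0 eq_sym oner_neq0.
exists (nrm v); first exact: nrm_gt0.
by apply: scale => w Sw; apply: v_min; rewrite inE.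
Qed.

Lemma compact_nrm_sphere s : compact [set x | nrm x = s].
Proof.
have [c c0 cnrm] := mx_norm_le_nrm.
apply: (@compact_level_set _ _ _ _ (s / c)) => [|x <-].
  exact: continuous_nrm.
by rewrite ler_pdivlMr // mulrC.
Qed.
End norm.

Section gradient.
Variables (R : realType) (n : nat).
Variables (nrm : 'rV[R]_n -> R) (N : 'rV[R]_n -> 'rV[R]_n).
Hypotheses (nrmP : is_norm nrm) (gradN : C1_gradient nrm N).

Lemma nrm_quotient_cvg x v : x != 0 ->
  h^-1 * (nrm (x + h *: v) - nrm x) @[h --> 0^'+] --> dotv v (N x).
Proof.
move=> x0; have [dnrm dnrmE _] := gradN x0.
rewrite -dnrmE -deriveE //.
have := cvg_dnbhs_at_right (@diff_derivable _ _ _ _ _ v dnrm); rewrite /derive.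
move=> cvg_quot; apply: (cvg_trans _ cvg_quot); apply: near_eq_cvg.
by near=> h; rewrite /= /shift (addrC (h *: v)).
Unshelve. all: end_near.
Qed.

Lemma dotv_N_le_nrm x v : x != 0 -> dotv v (N x) <= nrm v.
Proof.
move=> x0; apply: cvgr_to_le (nrm_quotient_cvg (v := v) x0) _.
near=> h; have h_gt0 : 0 < h by near: h; exact: nbhs_right_gt.
rewrite ler_pdivrMl // -(nrmZ_ge0 nrmP _ (ltW h_gt0)).
by have := nrm_triangle nrmP x (h *: v); lra.
Unshelve. all: end_near.
Qed.

Lemma dotv_N_id x : x != 0 -> dotv x (N x) = nrm x.
Proof.
move=> x0; apply/le_anti; rewrite dotv_N_le_nrm //=.
apply: cvgr_to_ge (nrm_quotient_cvg (v := x) x0) _.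
near=> h; have h_gt0 : 0 < h by near: h; exact: nbhs_right_gt.
rewrite -{2}(scale1r x) -scalerDl (nrmZ_ge0 nrmP); last by rewrite addr_ge0 // ltW.
by rewrite mulrDl mul1r addrAC subrr add0r mulKf ?gt_eqF.
Unshelve. all: end_near.
Qed.

Lemma dotv_norming_eq_N x w : x != 0 ->
  (forall v, dotv v w <= nrm v) -> dotv x w = nrm x ->
  forall v, dotv v w = dotv v (N x).
Proof.
move=> x0 w_le xw.
have le_N v : dotv v w <= dotv v (N x).
  apply: cvgr_to_ge (nrm_quotient_cvg (v := v) x0) _.
  near=> h; have h_gt0 : 0 < h by near: h; exact: nbhs_right_gt.
  rewrite ler_pdivlMl //.
  by have := w_le (x + h *: v); rewrite dotvDl dotvZl xw; lra.
move=> v; apply/le_anti; rewrite le_N /=.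
by have := le_N (- v); rewrite !dotvNl lerN2.
Unshelve. all: end_near.
Qed.

Lemma dotv_NZ x s v : x != 0 -> 0 < s -> dotv v (N (s *: x)) = dotv v (N x).
Proof.
move=> x0 s_gt0; have sx0 : s *: x != 0 by rewrite scaler_eq0 negb_or gt_eqF.
apply: dotv_norming_eq_N x0 _ _ _ => [u|]; first exact: dotv_N_le_nrm.
have := dotv_N_id sx0; rewrite dotvZl (nrmZ_ge0 nrmP x (ltW s_gt0)).
by move/(mulfI (lt0r_neq0 s_gt0)).
Qed.

Lemma hfun_ge0 x y : x != 0 -> 0 <= hfun nrm N x y.
Proof. by move=> x0; rewrite subr_ge0 dotv_N_le_nrm. Qed.

Lemma hfun_tangent_le_nrm x y : x != 0 -> dotv y (N x) = 0 ->
  hfun nrm N x (x + y) <= nrm y.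
Proof.
move=> x0 y0; rewrite /hfun dotvDl dotv_N_id // y0 addr0.
by have := nrm_triangle nrmP x y; lra.
Qed.

Lemma hfunZ s x y : x != 0 -> 0 < s ->
  hfun nrm N (s *: x) (s *: y) = s * hfun nrm N x y.
Proof.
move=> x0 s_gt0.
by rewrite /hfun dotv_NZ // (nrmZ_ge0 nrmP y (ltW s_gt0)) dotvZl mulrBr.
Qed.

Lemma hfun_segment_le x y t : x != 0 -> 0 <= t <= 1 ->
  hfun nrm N x (x + t *: y) <= t * hfun nrm N x (x + y).
Proof.
move=> x0 /andP[t_ge0 t_le1].
have -> : x + t *: y = (1 - t) *: x + t *: (x + y).
  by rewrite scalerDr scalerBl scale1r addrA subrK.
have := nrm_triangle nrmP ((1 - t) *: x) (t *: (x + y)).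
rewrite /hfun !(nrmZ_ge0 nrmP) ?subr_ge0 // !(dotvDl, dotvZl) dotv_N_id //.
by move=> ?; rewrite mulrBr mulrDr; lra.
Qed.

Local Notation pair := ('rV[R]_n * 'rV[R]_n)%type.

(* Adding |<z, N x>| makes the excess positive at every non-tangent z as well,
   so it can be minimised over a plain product of spheres rather than over its
   tangent part. *)
Definition tangent_defect (p : pair) : R :=
  hfun nrm N p.1 (p.1 + p.2) + `|dotv p.2 (N p.1)|.

Lemma continuous_tangent_defect (p : pair) :
  p.1 != 0 -> {for p, continuous tangent_defect}.
Proof.
move=> p10; have [_ _ cN] := gradN p10.
have cfst : {for p, continuous (fun q : pair => q.1)} by exact: cvg_fst.
have csnd : {for p, continuous (fun q : pair => q.2)} by exact: cvg_snd.
have cNfst : {for p, continuous (fun q : pair => N q.1)}.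
  exact: continuous_comp cfst cN.
have csum : {for p, continuous (fun q : pair => q.1 + q.2)} by exact: cvgD.
have cnrm : {for p, continuous (fun q : pair => nrm (q.1 + q.2))}.
  by apply: (continuous_comp csum); exact: continuous_nrm.
have cdot : {for p, continuous (fun q : pair => dotv (q.1 + q.2) (N q.1))}.
  exact: continuous_dotv.
have cabs : {for p, continuous (fun q : pair => `|dotv q.2 (N q.1)|)}.
  exact: continuous_comp (continuous_dotv csnd cNfst) (@norm_continuous _ _ _).
by apply: cvgD => //; apply: cvgB.
Qed.

Hypothesis strictP : strictly_convex_norm nrm.

Lemma hfun_tangent_gt0 x z : x != 0 -> dotv z (N x) = 0 -> z != 0 ->
  0 < hfun nrm N x (x + z).
Proof.
move=> x0 z_tan z0; rewrite lt_neqAle hfun_ge0 // andbT eq_sym.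
rewrite /hfun dotvDl dotv_N_id // z_tan addr0 subr_eq0; apply/eqP => nrm_xz.
have x_gt0 := nrm_gt0 nrmP x0.
have xz0 : x + z != 0.
  by apply: contraTneq x_gt0 => xz; rewrite -nrm_xz xz (nrm0 nrmP) ltxx.
have nrm_add : nrm (x + (x + z)) = nrm x + nrm (x + z).
  apply/le_anti; rewrite nrm_triangle //=.
  have := dotv_N_le_nrm (x + (x + z)) x0.
  by rewrite !dotvDl dotv_N_id // z_tan; lra.
have [a a_gt0 xz_ax] := strictP x0 xz0 nrm_add.
have a1 : a = 1.
  apply: (mulIf (lt0r_neq0 x_gt0)); rewrite mul1r.
  by rewrite -(nrmZ_ge0 nrmP x (ltW a_gt0)) -xz_ax.
move: z0; have -> : z = (x + z) - x by rewrite addrAC subrr add0r.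
by rewrite xz_ax a1 scale1r subrr eqxx.
Qed.

Lemma tangent_defectZ (s : R) x z : x != 0 -> 0 < s ->
  tangent_defect (s *: x, s *: z) = s * tangent_defect (x, z).
Proof.
move=> x0 s_gt0; rewrite /tangent_defect /= -scalerDr hfunZ // dotv_NZ //.
by rewrite dotvZl normrM (gtr0_norm s_gt0) -mulrDr.
Qed.

Lemma tangent_defect_gt0 p : p.1 != 0 -> p.2 != 0 -> 0 < tangent_defect p.
Proof.
case: p => x z /= x0 z0; rewrite /tangent_defect /=.
have [z_tan|z_ntan] := eqVneq (dotv z (N x)) 0.
  by rewrite z_tan normr0 addr0 hfun_tangent_gt0.
by rewrite ltr_wpDl ?hfun_ge0 ?normr_gt0.
Qed.

Lemma tangent_sphere_gap r : 0 < r -> exists2 c : R, 0 < c &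
  forall x z, x != 0 -> dotv z (N x) = 0 -> nrm z = r * nrm x ->
    c * nrm x <= hfun nrm N x (x + z).
Proof.
move=> r_gt0; pose S := [set x | nrm x = 1] `*` [set z | nrm z = r].
have S_neq0 p : S p -> p.1 != 0 /\ p.2 != 0.
  by case=> /= nrm1 nrm2; split; apply: contra_eq_neq (nrm0 nrmP) => <-;
    rewrite ?nrm1 ?nrm2 ?gt_eqF.
have normalize x z : x != 0 -> dotv z (N x) = 0 -> nrm z = r * nrm x ->
    let s := (nrm x)^-1 in
    S (s *: x, s *: z) /\
    tangent_defect (s *: x, s *: z) = s * hfun nrm N x (x + z).
  move=> x0 z_tan nrm_z s; have s_gt0 : 0 < s by rewrite invr_gt0 nrm_gt0.
  rewrite tangent_defectZ // /tangent_defect /= z_tan normr0 addr0.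
  rewrite /S /= !(nrmZ_ge0 nrmP _ (ltW s_gt0)) nrm_z mulrCA mulVf ?mulr1 //.
  by rewrite gt_eqF ?nrm_gt0.
have [[p Sp]|S0] := pselect (S !=set0); last first.
  (* only for n = 0, where there is no x != 0 *)
  exists 1 => // x z x0 z_tan nrm_z; exfalso; apply: S0.
  by have [Sxz _] := normalize x z x0 z_tan nrm_z; exact: (ex_intro _ _ Sxz).
have cS : compact S by apply: compact_setX; apply: compact_nrm_sphere.
have c_defect : {within S, continuous tangent_defect}.
  rewrite continuous_subspace_in => q /set_mem Sq.
  apply: continuous_subspaceT_for => //.
  by apply: continuous_tangent_defect; case: (S_neq0 q Sq).
have [q /set_mem Sq q_min] := compact_EVT_min (ex_intro _ p Sp) cS c_defect.
have q_gt0 : 0 < tangent_defect q.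
  by case: (S_neq0 q Sq); exact: tangent_defect_gt0.
exists (tangent_defect q) => // x z x0 z_tan nrm_z.
have [Sxz defect_xz] := normalize x z x0 z_tan nrm_z.
have := q_min _ (mem_set Sxz); rewrite defect_xz.
by rewrite ler_pdivlMl ?(nrm_gt0 nrmP x0) // mulrC.
Qed.

Lemma tangent_far_gap r : 0 < r -> exists2 c : R, 0 < c &
  forall x y, x != 0 -> dotv y (N x) = 0 -> r * nrm x <= nrm y ->
    c * nrm y <= hfun nrm N x (x + y).
Proof.
move=> r_gt0; have [c c_gt0 c_gap] := tangent_sphere_gap r_gt0.
exists (c / r) => [|x y x0 y_tan far]; first by rewrite divr_gt0.
have x_gt0 := nrm_gt0 nrmP x0.
have y_gt0 : 0 < nrm y by apply: lt_le_trans far; rewrite mulr_gt0.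
pose t := r * nrm x / nrm y.
have t_gt0 : 0 < t by rewrite !mulr_gt0 ?invr_gt0.
have t_le1 : t <= 1 by rewrite ler_pdivrMr // mul1r.
have nrm_ty : nrm (t *: y) = r * nrm x.
  by rewrite (nrmZ_ge0 nrmP y (ltW t_gt0)) divfK ?gt_eqF.
have ty_tan : dotv (t *: y) (N x) = 0 by rewrite dotvZl y_tan mulr0.
have gap := c_gap x (t *: y) x0 ty_tan nrm_ty.
have t01 : 0 <= t <= 1 by rewrite ltW.
have seg := hfun_segment_le y x0 t01.
rewrite -(ler_pM2l t_gt0); apply: le_trans seg; apply: le_trans gap.
suff -> : t * (c / r * nrm y) = c * nrm x by [].
by rewrite /t; field; rewrite !gt_eqF.
Qed.

Lemma doubling_global T r : 0 < r ->
  (forall x y, x != 0 -> nrm y <= r * nrm x -> dotv y (N x) = 0 ->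
     hfun nrm N x (x + 2 *: y) <= T * hfun nrm N x (x + y)) ->
  exists T' : R, forall x y, x != 0 -> dotv y (N x) = 0 ->
     hfun nrm N x (x + 2 *: y) <= T' * hfun nrm N x (x + y).
Proof.
move=> r_gt0 near_doubling; have [c c_gt0 far_gap] := tangent_far_gap r_gt0.
exists (Num.max T (2 * c^-1)) => x y x0 y_tan.
have h_ge0 := hfun_ge0 (x + y) x0.
have [near|far] := lerP (nrm y) (r * nrm x).
  apply: le_trans (near_doubling x y x0 near y_tan) _.
  by rewrite ler_wpM2r // le_max lexx.
apply: (@le_trans _ _ (2 * c^-1 * hfun nrm N x (x + y))); last first.
  by rewrite ler_wpM2r // le_max lexx orbT.
have y2_tan : dotv (2 *: y) (N x) = 0 by rewrite dotvZl y_tan mulr0.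
apply: le_trans (hfun_tangent_le_nrm x0 y2_tan) _.
rewrite (nrmZ_ge0 nrmP y) // -mulrA ler_pM2l // ler_pdivlMl //.
exact: far_gap (ltW far).
Qed.

Lemma balanced_global K r : 0 < r ->
  (forall x y, x != 0 -> nrm y <= r * nrm x -> dotv y (N x) = 0 ->
     hfun nrm N x (x + y) <= K * hfun nrm N x (x - y)) ->
  exists K' : R, forall x y, x != 0 -> dotv y (N x) = 0 ->
     hfun nrm N x (x + y) <= K' * hfun nrm N x (x - y).
Proof.
move=> r_gt0 near_balanced; have [c c_gt0 far_gap] := tangent_far_gap r_gt0.
exists (Num.max K c^-1) => x y x0 y_tan.
have h_ge0 := hfun_ge0 (x - y) x0.
have [near|far] := lerP (nrm y) (r * nrm x).
  apply: le_trans (near_balanced x y x0 near y_tan) _.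
  by rewrite ler_wpM2r // le_max lexx.
apply: (@le_trans _ _ (c^-1 * hfun nrm N x (x - y))); last first.
  by rewrite ler_wpM2r // le_max lexx orbT.
have yN_tan : dotv (- y) (N x) = 0 by rewrite dotvNl y_tan oppr0.
apply: le_trans (hfun_tangent_le_nrm x0 y_tan) _.
rewrite ler_pdivlMl // -(nrmN nrmP); apply: far_gap x0 yN_tan _.
by rewrite (nrmN nrmP) ltW.
Qed.
End gradient.

Theorem lemma6p4 (R : realType) (n : nat) (nrm : 'rV[R]_n -> R)
  (N : 'rV[R]_n -> 'rV[R]_n) :
  is_norm nrm -> strictly_convex_norm nrm -> C1_gradient nrm N ->
  (forall T r : R, 0 < T -> 0 < r ->
     (forall x y : 'rV[R]_n, x != 0 -> nrm y <= r * nrm x -> dotv y (N x) = 0 ->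
        hfun nrm N x (x + 2 *: y) <= T * hfun nrm N x (x + y)) ->
     exists T' : R, forall x y : 'rV[R]_n, x != 0 -> dotv y (N x) = 0 ->
        hfun nrm N x (x + 2 *: y) <= T' * hfun nrm N x (x + y))
  /\
  (forall r K : R, 0 < r -> 0 < K ->
     (forall x y : 'rV[R]_n, x != 0 -> nrm y <= r * nrm x -> dotv y (N x) = 0 ->
        hfun nrm N x (x + y) <= K * hfun nrm N x (x - y)) ->
     exists K' : R, forall x y : 'rV[R]_n, x != 0 -> dotv y (N x) = 0 ->
        hfun nrm N x (x + y) <= K' * hfun nrm N x (x - y)).
Proof.
move=> nrmP strictP gradN; split=> [T r _ r_gt0 | r K r_gt0 _].
  exact: doubling_global.
exact: balanced_global.
Qed.
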